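(* Let $S,P,Q$ be pairwise disjoint finite sets and $\mathcal{M}_{SP}$, $\mathcal{M}_{PQ}$ matroids on $S\uplus P$, $P\uplus Q$ which are $\{S,P\}$-complete and $\{P,Q\}$-complete respectively. Put $\mathcal{M}_{SQ}:=\mathcal{M}_{SP}\leftrightarrow\mathcal{M}_{PQ}$. 1. If $\mathcal{M}_{SP}$ and $\mathcal{M}_{PQ}$ are compatible, then $\mathcal{M}_{SQ}$ is $\{S,Q\}$-complete, with $\mathcal{E}_S(\mathcal{M}_{SP})=\mathcal{E}_S(\mathcal{M}_{SQ})$ and $\mathcal{E}_Q(\mathcal{M}_{PQ})=\mathcal{E}_Q(\mathcal{M}_{SQ})$. 2. If every block of $\mathcal{E}_P(\mathcal{M}_{PQ})$ is a union of blocks of $\mathcal{E}_P(\mathcal{M}^*_{SP})$, then $\mathcal{M}_{PQ}=\mathcal{M}^*_{SP}\leftrightarrow\mathcal{M}_{SQ}$. 3. If $Q=\emptyset$ (so $\mathcal{M}_{PQ}=\mathcal{M}_P$ is a matroid on $P$) and the collection of bases of $\mathcal{M}_P$ is a union of blocks of $\mathcal{E}_P(\mathcal{M}^*_{SP})$, then $\mathcal{M}_P=\mathcal{M}^*_{SP}\leftrightarrow(\mathcal{M}_{SP}\leftrightarrow\mathcal{M}_P)$.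
   Context: Matroids are on finite sets, given by their bases; $\mathcal{M}^*$ is the dual. $\mathcal{M}\times T$ is the contraction (matroid on $T$ whose bases are the minimal sets $b\cap T$, $b$ a base); $\mathbf{0}_X$ has only base $\emptyset$; $\oplus$ direct sum. For matroids on the same set, $\mathcal{M}_1\vee\mathcal{M}_2$ has bases the maximal sets $b_1\cup b_2$. For $\mathcal{M}_A$ on $A$ and $\mathcal{M}_B$ on $B$, the linking is $\mathcal{M}_A\leftrightarrow\mathcal{M}_B:=((\mathcal{M}_A\oplus\mathbf{0}_{B-A})\vee(\mathcal{M}_B\oplus\mathbf{0}_{A-B}))\times((A-B)\cup(B-A))$. A matroid $\mathcal{M}_{AB}$ on $A\uplus B$ is $\{A,B\}$-complete if whenever $b_A,b'_A\subseteq A$, $b_B,b'_B\subseteq B$ and $b_A\uplus b_B$, $b_A\uplus b'_B$, $b'_A\uplus b_B$ are bases, then $b'_A\uplus b'_B$ is a base (every matroid on $P$ is $\{P,\emptyset\}$-complete; $\mathcal{M}$ is complete iff $\mathcal{M}^*$ is). For an $\{A,B\}$-complete $\mathcal{M}_{AB}$: an $A$-part is $X\subseteq A$ with $X\uplus Y$ a base for some $Y\subseteq B$; $X\sim X'$ iff there is $Y\subseteq B$ with $X\uplus Y$ and $X'\uplus Y$ both bases (an equivalence relation on $A$-parts); $\mathcal{E}_A(\mathcal{M}_{AB})$ is the set of equivalence classes (blocks), each a family of subsets of $A$. $\mathcal{M}_{SP}$ and $\mathcal{M}_{PQ}$ are called compatible iff $\mathcal{E}_P(\mathcal{M}^*_{SP})=\mathcal{E}_P(\mathcal{M}_{PQ})$.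 *)

(* Matroids are represented by their family of bases,
   a {set {set T}} over an ambient finite type T. *)
From mathcomp Require Import all_boot.
Set Implicit Arguments. Unset Strict Implicit. Unset Printing Implicit Defensive.

Section Matroids.
Variable T : finType.

Definition matroid_on (E : {set T}) (B : {set {set T}}) : Prop :=
  [/\ B != set0,
      (forall b, b \in B -> b \subset E) &
      (forall b1 b2 x, b1 \in B -> b2 \in B -> x \in b1 :\: b2 ->
         exists2 y, y \in b2 :\: b1 & (b1 :\ x) :|: [set y] \in B)].

Definition dual (E : {set T}) (B : {set {set T}}) : {set {set T}} :=
  [set E :\: b | b in B].

Definition minsets (F : {set {set T}}) : {set {set T}} :=
  [set X in F | [forall Y in F, (Y \subset X) ==> (Y == X)]].
Definition maxsets (F : {set {set T}}) : {set {set T}} :=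
  [set X in F | [forall Y in F, (X \subset Y) ==> (Y == X)]].

Definition contract (B : {set {set T}}) (T' : {set T}) : {set {set T}} :=
  minsets [set b :&: T' | b in B].

Definition zeroM : {set {set T}} := [set set0].

Definition dsum (B1 B2 : {set {set T}}) : {set {set T}} :=
  [set b1 :|: b2 | b1 in B1, b2 in B2].

Definition munion (B1 B2 : {set {set T}}) : {set {set T}} :=
  maxsets [set b1 :|: b2 | b1 in B1, b2 in B2].

Definition link (A B : {set T}) (MA MB : {set {set T}}) : {set {set T}} :=
  contract (munion (dsum MA zeroM) (dsum MB zeroM)) ((A :\: B) :|: (B :\: A)).

Definition complete (A B : {set T}) (M : {set {set T}}) : Prop :=
  forall bA bA' bB bB' : {set T}, bA \subset A -> bA' \subset A ->
    bB \subset B -> bB' \subset B ->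
    bA :|: bB \in M -> bA :|: bB' \in M -> bA' :|: bB \in M ->
    bA' :|: bB' \in M.

Definition aparts (A B : {set T}) (M : {set {set T}}) : {set {set T}} :=
  [set X : {set T} | (X \subset A) &&
           [exists Y : {set T}, (Y \subset B) && (X :|: Y \in M)]].

Definition aequiv (A B : {set T}) (M : {set {set T}}) (X X' : {set T}) : bool :=
  [exists Y : {set T}, [&& Y \subset B, X :|: Y \in M & X' :|: Y \in M]].

Definition blocks (A B : {set T}) (M : {set {set T}}) : {set {set {set T}}} :=
  [set [set X' in aparts A B M | aequiv A B M X X'] | X in aparts A B M].

Definition union_of_blocks (F : {set {set T}}) (E : {set {set {set T}}}) : Prop :=
  exists2 G : {set {set {set T}}}, G \subset E & F = \bigcup_(g in G) g.

End Matroids.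

(* Write bases of M_SP as X :|: Y with X in S, Y in P, and bases of M_PQ as
   Y' :|: Z with Y' in P, Z in Q.  Once some X0 :|: Y0 in M_SP and
   (P :\: Y0) :|: Z0 in M_PQ exist, the bases of the linking M_SQ are exactly
   the X :|: Z with X :|: Y in M_SP and (P :\: Y) :|: Z in M_PQ for some Y:
   the maximal unions of bases are the disjoint ones, and among their traces
   outside P the minimal ones come from unions covering P.  The P-parts of
   M_SP^* are the complements P :\: Y of the P-parts of M_SP, with the same
   equivalence.  If every block of M_PQ is a union of blocks of M_SP^*, the
   P-parts of M_PQ are P-parts of M_SP^* and equivalence in M_SP^* implies
   equivalence in M_PQ; by completeness, equivalent parts have the same
   complementary parts.  This provides the witness above and lets bases be
   transported between M_SP and M_PQ: part 2 follows by describing the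
   linking twice, part 1 by using the refinement in both directions, and
   part 3 is part 2 for Q = set0, where M_P forms a single block. *)

From mathcomp Require Import all_boot zify.
Set Implicit Arguments. Unset Strict Implicit. Unset Printing Implicit Defensive.

Lemma subset_memb (T : finType) (z : T) (A B : {set T}) :
  A \subset B -> (z \in A) ==> (z \in B).
Proof. by move/subsetP=> sAB; apply/implyP/sAB. Qed.

Lemma disjoint_memb (T : finType) (z : T) (A B : {set T}) :
  [disjoint A & B] -> ~~ ((z \in A) && (z \in B)).
Proof. by move=> dAB; apply/negP=> /andP[zA]; rewrite (disjointFr dAB zA). Qed.

(* Truth tables over the atoms [z \in X], after instantiating every inclusion
   and disjointness hypothesis at [z]; atoms [z == x] are not interpreted. *)
Ltac mem_decide z :=
  repeat match goal with
  | H : is_true (_ \subset _) |- _ => move: (subset_memb z H); clear H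
  | H : is_true [disjoint _ & _] |- _ => move: (disjoint_memb z H); clear H
  end;
  rewrite ?inE;
  repeat match goal with |- context [?x \in ?X] => case: (x \in X) end;
  done.

Lemma setD_exchange (T : finType) (b C : {set T}) x y :
  y \in C -> ((b :\ x) :|: [set y]) :\: C = (b :\: C) :\ x.
Proof.
move=> yC; apply/setP=> z; rewrite !inE.
by case: (eqVneq z y) => [->|_]; rewrite ?yC ?andbF // orbF andbCA.
Qed.

Lemma cardsU_disjoint (T : finType) (A B : {set T}) :
  [disjoint A & B] -> #|A :|: B| = #|A| + #|B|.
Proof. by move=> dAB; apply/eqP; rewrite (leq_card_setU A B).2. Qed.

Lemma disjointsU1 (T : finType) x (A B : {set T}) :
  [disjoint x |: A & B] = (x \notin B) && [disjoint A & B].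
Proof. by rewrite !disjoints_subset subUset sub1set inE. Qed.

Lemma setDDK (T : finType) (E Z : {set T}) : Z \subset E -> E :\: (E :\: Z) = Z.
Proof. by move=> sZE; rewrite setDDr setDv set0U; apply/setIidPr. Qed.

Lemma setI_symdiff (T : finType) (A B u : {set T}) : u \subset A :|: B ->
  u :&: ((A :\: B) :|: (B :\: A)) = u :\: (A :&: B).
Proof. by move=> suAB; apply/setP=> z; mem_decide z. Qed.

Lemma setIU_split (T : finType) (A B b : {set T}) : b \subset A :|: B ->
  (b :&: A) :|: (b :&: B) = b.
Proof. by move=> sb; rewrite -setIUr; apply/setIidPl. Qed.

Lemma shift_overlap (T : finType) (I1 I2 J1 J2 : {set T}) x :
  [disjoint I1 & I2] -> [disjoint J1 & J2] -> x \in J1 :\: I1 -> x \in I2 ->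
  [/\ (x |: I1) :|: (I2 :\ x) = I1 :|: I2, [disjoint x |: I1 & I2 :\ x] &
      #|J1 :\: (x |: I1)| + #|J2 :\: (I2 :\ x)| < #|J1 :\: I1| + #|J2 :\: I2|].
Proof.
move=> dI dJ xJI1 xI2; have /setDP[xJ1 xI1] := xJI1.
have xJ2 : x \notin J2 by rewrite (disjointFr dJ xJ1).
split.
- by apply/setP=> z; rewrite !inE; case: eqVneq => [->|] /=; rewrite ?xI2 ?orbT.
- rewrite -setI_eq0; apply/eqP/setP=> z; rewrite !inE; case: eqVneq => [->|] //=.
  by move=> _; apply/negbTE/disjoint_memb.
have -> : J1 :\: (x |: I1) = (J1 :\: I1) :\ x by apply/setP=> z; rewrite !inE negb_or andbA.
have -> : J2 :\: (I2 :\ x) = J2 :\: I2.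
  apply/setP=> z; rewrite !inE negb_and negbK.
  by case: eqVneq => [->|]; rewrite ?(negbTE xJ2) ?andbF.
by rewrite ltn_add2r (cardsD1 x (J1 :\: I1)) xJI1.
Qed.

Lemma augment_to (T : finType) (p : {set T} -> Prop) :
  (forall I J : {set T}, p I -> p J -> #|I| < #|J| -> exists2 x, x \in J :\: I & p (x |: I)) ->
  forall I J : {set T}, p I -> p J -> #|I| <= #|J| ->
  exists K : {set T}, [/\ I \subset K, K \subset I :|: J, #|K| = #|J| & p K].
Proof.
move=> aug I J + pJ; move en: (#|J| - #|I|) => n.
elim: n I en => [|n IH] I en pI leIJ.
  by exists I; rewrite subxx subsetUl; split=> //; apply/eqP; rewrite eqn_leq leIJ -subn_eq0 en.
have ltIJ : #|I| < #|J| by rewrite -subn_gt0 en.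
have [x /setDP[xJ xI] pxI] := aug I J pI pJ ltIJ.
have card_xI : #|x |: I| = #|I|.+1 by rewrite cardsU1 xI.
have en' : #|J| - #|x |: I| = n by rewrite card_xI subnS en.
have [K [sxIK sKxIJ cardK pK]] := IH (x |: I) en' pxI ltac:(by rewrite card_xI).
exists K; split=> //; first by apply: subset_trans sxIK; apply: subsetUr.
by apply: subset_trans sKxIJ _; rewrite -setUA subUset subxx sub1set inE xJ orbT.
Qed.

Section Bases.
Variables (T : finType) (E : {set T}) (M : {set {set T}}).
Hypothesis hM : matroid_on E M.
Implicit Types (b I J : {set T}).

Lemma base_subset b : b \in M -> b \subset E.
Proof. by case: hM => _ + _; apply. Qed.

Lemma card_base_le b1 b2 : b1 \in M -> b2 \in M -> #|b1| <= #|b2|.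
Proof.
case: hM => _ _ exch.
move en: #|b1 :\: b2| => n; elim: n b1 en => [|n IH] b1 en b1M b2M.
  by apply: subset_leq_card; rewrite -setD_eq0 -cards_eq0 en.
have [x xb12] : exists x, x \in b1 :\: b2 by apply/card_gt0P; rewrite en.
have [y /setDP[yb2 yb1] b1'M] := exch _ _ _ b1M b2M xb12.
have xb1 : x \in b1 by case/setDP: xb12.
have card_b1' : #|(b1 :\ x) :|: [set y]| = #|b1|.
  by rewrite setUC cardsU1 (cardsD1 x b1) xb1 !inE (negbTE yb1) andbF.
rewrite -card_b1'; apply: IH b1'M b2M.
by move: en; rewrite setD_exchange // (cardsD1 x (b1 :\: b2)) xb12 => -[].
Qed.

Lemma card_base b1 b2 : b1 \in M -> b2 \in M -> #|b1| = #|b2|.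
Proof. by move=> b1M b2M; apply/eqP; rewrite eqn_leq !card_base_le. Qed.

Definition indep I := exists2 b, b \in M & I \subset b.

Lemma indep_subset I J : indep J -> I \subset J -> indep I.
Proof. by case=> b bM sJb sIJ; exists b => //; apply: subset_trans sJb. Qed.

Lemma indep_card_base I b : indep I -> b \in M -> #|b| <= #|I| -> I \in M.
Proof.
case=> c cM sIc bM le_bI; suff -> : I = c by [].
by apply/eqP; rewrite eqEcard sIc -(card_base bM cM).
Qed.

Lemma indep_augment I J : indep I -> indep J -> #|I| < #|J| ->
  exists2 x, x \in J :\: I & indep (x |: I).
Proof.
case: hM => _ _ exch [B BM sIB] [B' B'M sJB'] ltIJ.
move en: #|B :\: B'| => n; elim/ltn_ind: n B en BM sIB => n IH B en BM sIB.
case: (set_0Vmem ((J :\: I) :&: B)) => [noJB | [x]]; last first.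
  rewrite inE => /andP[xJI xB]; exists x => //.
  by exists B; rewrite // subUset sub1set xB.
case: (set_0Vmem ((B :\: I) :\: B')) => [noBB' | [z zBIB']].
  have sBJ : B :\: I \subset B' :\: J.
    apply/subsetP=> z; move/setP: noJB => /(_ z); move/setP: noBB' => /(_ z).
    mem_decide z.
  have := subset_leq_card sBJ; rewrite !cardsDS // (card_base BM B'M).
  by move: ltIJ (subset_leq_card sJB'); clear; lia.
have [zB zI zB'] : [/\ z \in B, z \notin I & z \notin B'].
  by move: zBIB'; rewrite !inE => /andP[-> /andP[-> ->]].
have zBB' : z \in B :\: B' by rewrite inE zB zB'.
have [y /setDP[yB' yB] B1M] := exch _ _ _ BM B'M zBB'.
apply: (IH _ _ _ erefl B1M); last first.
  apply/subsetP=> w wI; rewrite !inE (subsetP sIB _ wI) andbT.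
  by apply/orP; left; apply: contraNneq zI => <-.
by rewrite setD_exchange // -en (cardsD1 z (B :\: B')) zBB'.
Qed.

Lemma base_exchange_into b1 b2 x : b1 \in M -> b2 \in M -> x \in b2 :\: b1 ->
  exists2 y, y \in b1 :\: b2 & (b1 :\ y) :|: [set x] \in M.
Proof.
move=> b1M b2M /setDP[xb2 xb1].
have iI : indep (x |: (b1 :&: b2)) by exists b2; rewrite // subUset sub1set xb2 subsetIr.
have leIb1 : #|x |: (b1 :&: b2)| <= #|b1|.
  by rewrite (card_base b1M b2M) subset_leq_card // subUset sub1set xb2 subsetIr.
have ib1 : indep b1 by exists b1.
have [K [sIK sKxb1 cardK iK]] := augment_to indep_augment iI ib1 leIb1.
have KM : K \in M by apply: indep_card_base iK b1M _; rewrite cardK.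
have sKxb1' : K \subset x |: b1.
  by apply: subset_trans sKxb1 _; rewrite -setUA setUS // subUset subsetIl subxx.
have [y yK] : exists y, y \in (x |: b1) :\: K.
  by apply/card_gt0P; rewrite cardsDS // cardsU1 xb1 cardK subn_gt0.
have [yx yb1 yK'] : [/\ y != x, y \in b1 & y \notin K].
  move: yK; rewrite !inE => /andP[yK' yxb1].
  have yx : y != x by apply: contraNneq yK' => ->; apply: (subsetP sIK); rewrite setU11.
  by move: yxb1; rewrite (negbTE yx).
exists y.
  rewrite inE yb1 andbT; apply: contra yK' => yb2.
  by apply: (subsetP sIK); rewrite !inE yb1 yb2 orbT.
suff <- : K = (b1 :\ y) :|: [set x] by [].
apply/eqP; rewrite eqEcard cardK setUC cardsU1 !inE (negbTE xb1) andbF (cardsD1 y b1) yb1.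
rewrite leqnn andbT; apply/subsetP=> z zK.
have zy : z != y by apply: contraNneq yK' => <-.
by move: (subsetP sKxb1' z zK); rewrite !inE zy.
Qed.

End Bases.

Lemma dual_matroid (T : finType) (E : {set T}) (M : {set {set T}}) :
  matroid_on E M -> matroid_on E (dual E M).
Proof.
move=> hM; case: (hM) => /set0Pn[b bM] sME _; split.
- by apply/set0Pn; exists (E :\: b); apply: imset_f.
- by move=> _ /imsetP[b' _ ->]; apply: subsetDl.
move=> _ _ x /imsetP[b1 b1M ->] /imsetP[b2 b2M ->].
rewrite !inE negb_and negbK => /andP[/orP[xb2|xE] /andP[xb1 xE']]; last by rewrite xE' in xE.
have xb21 : x \in b2 :\: b1 by rewrite inE xb1 xb2.
have [y /setDP[yb1 yb2] b1'M] := base_exchange_into hM b1M b2M xb21.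
have yE : y \in E := subsetP (sME _ b1M) y yb1.
exists y; first by rewrite !inE yb1 yb2 yE.
apply/imsetP; exists ((b1 :\ y) :|: [set x]) => //.
have xy : x != y by apply: contraNneq xb1 => ->.
apply/setP=> z; rewrite !inE; case: (eqVneq z x) => [->|zx].
  by rewrite (negbTE xy) /= orbT.
by case: (eqVneq z y) => [->|zy] /=; rewrite ?orbT ?yE ?orbF.
Qed.

Section UnionIndep.
Variables (T : finType) (A B : {set T}) (MA MB : {set {set T}}).
Hypotheses (hA : matroid_on A MA) (hB : matroid_on B MB).
Implicit Types (I J : {set T}).

Definition union_indep I := exists a b, [/\ a \in MA, b \in MB & I \subset a :|: b].

Lemma union_indepP I : union_indep I <->
  exists I1 I2, [/\ indep MA I1, indep MB I2, [disjoint I1 & I2] & I = I1 :|: I2].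
Proof.
split=> [[a [b [aA bB sI]]]|[I1 [I2 [[a aA s1] [b bB s2] _ ->]]]]; last first.
  by exists a, b; split=> //; apply: setUSS.
exists (I :&: a), (I :\: a); split; last by rewrite setID.
- by exists a; rewrite ?subsetIr.
- by exists b => //; apply/subsetP=> z; mem_decide z.
by rewrite -setI_eq0; apply/eqP/setP=> z; mem_decide z.
Qed.

Lemma union_indep_augment I J : union_indep I -> union_indep J -> #|I| < #|J| ->
  exists2 x, x \in J :\: I & union_indep (x |: I).
Proof.
move=> /union_indepP[I1 [I2 [iI1 iI2 dI ->]]] /union_indepP[J1 [J2 [iJ1 iJ2 dJ ->]]].
(* Induction on the overlap defect; an augmenting point of I1 lying in I2 is
   moved from I2 to I1. *)
move en: (#|J1 :\: I1| + #|J2 :\: I2|) => n.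
elim/ltn_ind: n I1 I2 en iI1 iI2 dI => n IH I1 I2 en iI1 iI2 dI.
move=> ltIJ; have [lt1|lt2] : #|I1| < #|J1| \/ #|I2| < #|J2|.
  by move: ltIJ; rewrite !cardsU_disjoint //; clear; lia.
- have [x xJI1 ixI1] := indep_augment hA iI1 iJ1 lt1.
  have /setDP[xJ1 xI1] := xJI1.
  case xI2 : (x \in I2).
    have [eI dI' lt'] := shift_overlap dI dJ xJI1 xI2.
    rewrite -eI; apply: (IH _ _ _ _ erefl ixI1 _ dI'); rewrite ?eI -?en //.
    exact: indep_subset iI2 (subsetDl _ _).
  exists x; first by rewrite !inE (negbTE xI1) xI2 xJ1.
  apply/union_indepP; exists (x |: I1), I2; split=> //; last by rewrite setUA.
  by rewrite disjointsU1 xI2.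
- have [x xJI2 ixI2] := indep_augment hB iI2 iJ2 lt2.
  have /setDP[xJ2 xI2] := xJI2.
  case xI1 : (x \in I1).
    have dI21 : [disjoint I2 & I1] by rewrite disjoint_sym.
    have dJ21 : [disjoint J2 & J1] by rewrite disjoint_sym.
    have [eI dI' lt'] := shift_overlap dI21 dJ21 xJI2 xI1.
    have eI' : (I1 :\ x) :|: (x |: I2) = I1 :|: I2 by rewrite setUC eI setUC.
    rewrite -eI'; apply: (IH _ _ _ _ erefl _ ixI2).
    - by rewrite addnC -en [X in _ < X]addnC.
    - exact: indep_subset iI1 (subsetDl _ _).
    - by rewrite disjoint_sym.
    - by rewrite eI'.
  exists x; first by rewrite !inE (negbTE xI2) xI1 xJ2 orbT.
  apply/union_indepP; exists I1, (x |: I2); split=> //; last by rewrite setUCA.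
  by rewrite disjoint_sym disjointsU1 xI1 disjoint_sym.
Qed.

End UnionIndep.

Lemma dsum0 (T : finType) (M : {set {set T}}) : dsum M (zeroM T) = M.
Proof.
apply/setP=> b; apply/imset2P/idP => [[b1 b2 b1M] |bM].
  by rewrite inE => /eqP-> ->; rewrite setU0.
by exists b set0; rewrite ?setU0 ?inE.
Qed.

Section Linking.
Variables (T : finType) (A B : {set T}) (MA MB : {set {set T}}).
Hypotheses (hA : matroid_on A MA) (hB : matroid_on B MB).
(* Disjoint bases covering A :&: B give the union its maximal size and make
   the contraction explicit. *)
Variables f1 f2 : {set T}.
Hypotheses (f1A : f1 \in MA) (f2B : f2 \in MB) (df : [disjoint f1 & f2])
  (cf : A :&: B \subset f1 :|: f2).
Implicit Types (a b u w I : {set T}).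

Local Notation C := (A :&: B).
Local Notation r := (#|f1| + #|f2|).

Lemma card_setU_base a b : a \in MA -> b \in MB ->
  #|a :|: b| <= r ?= iff [disjoint a & b].
Proof.
by move=> aA bB; rewrite -(card_base hA aA f1A) -(card_base hB bB f2B); apply: leq_card_setU.
Qed.

Lemma card_setU_base_disjoint a b : a \in MA -> b \in MB -> [disjoint a & b] ->
  #|a :|: b| = r.
Proof. by move=> aA bB dab; apply/eqP; rewrite (card_setU_base aA bB).2. Qed.

Lemma card_union_indep I : union_indep MA MB I -> #|I| <= r.
Proof.
by case=> a [b [aA bB sI]]; apply: leq_trans (subset_leq_card sI) (card_setU_base aA bB).
Qed.

Lemma union_indep_full I : union_indep MA MB I -> #|I| = r ->
  exists a b, [/\ a \in MA, b \in MB, [disjoint a & b] & I = a :|: b].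
Proof.
case=> a [b [aA bB sI]] cardI; exists a, b.
have eI : I = a :|: b by apply/eqP; rewrite eqEcard sI cardI card_setU_base.
by split=> //; rewrite -(card_setU_base aA bB).2 -eI cardI.
Qed.

Lemma munionP u : u \in munion MA MB <->
  exists a b, [/\ a \in MA, b \in MB, [disjoint a & b] & u = a :|: b].
Proof.
split=> [|[a [b [aA bB dab ->]]]]; last first.
  rewrite inE imset2_f //=; apply/forall_inP=> _ /imset2P[a' b' a'A b'B ->].
  apply/implyP=> sab; rewrite eq_sym eqEcard sab /=.
  by rewrite (card_setU_base_disjoint aA bB dab) card_setU_base.
rewrite inE => /andP[/imset2P[a b aA bB ->] umax].
apply: union_indep_full; first by exists a, b.
apply/eqP; rewrite eqn_leq (card_setU_base aA bB) /= leqNgt; apply/negP=> lt_ab.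
have iab : union_indep MA MB (a :|: b) by exists a, b.
have if12 : union_indep MA MB (f1 :|: f2) by exists f1, f2.
have lt_f12 : #|a :|: b| < #|f1 :|: f2| by rewrite (cardsU_disjoint df).
have [x /setDP[_ xab] [a' [b' [a'A b'B sx]]]] := union_indep_augment hA hB iab if12 lt_f12.
have sab : a :|: b \subset a' :|: b' by apply: subset_trans sx; apply: subsetUr.
move/forall_inP: umax => /(_ _ (imset2_f _ a'A b'B)); rewrite sab => /eqP eab.
by move: sx; rewrite eab subUset sub1set (negbTE xab).
Qed.

Lemma card_munion u : u \in munion MA MB -> #|u| = r.
Proof. by case/munionP=> a [b [aA bB dab ->]]; apply: card_setU_base_disjoint. Qed.

Lemma munion_subset u : u \in munion MA MB -> u \subset A :|: B.
Proof.
case/munionP=> a [b [aA bB _ ->]].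
by apply: setUSS; [apply: (base_subset hA) | apply: (base_subset hB)].
Qed.

Lemma link_contract : link A B MA MB = contract (munion MA MB) ((A :\: B) :|: (B :\: A)).
Proof. by rewrite /link !dsum0. Qed.

Lemma mem_link a b : a \in MA -> b \in MB -> [disjoint a & b] -> C \subset a :|: b ->
  (a :|: b) :\: C \in link A B MA MB.
Proof.
move=> aA bB dab sC; rewrite link_contract inE.
have uU : a :|: b \in munion MA MB by apply/munionP; exists a, b.
rewrite -(setI_symdiff (munion_subset uU)) (imset_f (fun u => u :&: _) uU) /=.
apply/forall_inP=> _ /imsetP[u uU' ->]; apply/implyP.
rewrite !setI_symdiff ?munion_subset // => su; rewrite eqEcard su /=.
rewrite cardsDS // cardsD (card_munion uU) (card_munion uU') leq_sub2l //.
by apply: subset_leq_card; apply: subsetIr.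
Qed.

Lemma link_cover w : w \in link A B MA MB -> exists a b,
  [/\ a \in MA, b \in MB, [disjoint a & b], C \subset a :|: b & w = (a :|: b) :\: C].
Proof.
rewrite link_contract inE => /andP[/imsetP[u uU ->] umin].
rewrite setI_symdiff ?munion_subset //.
suff sCu : C \subset u.
  by have [a [b [aA bB dab eu]]] := (munionP u).1 uU; exists a, b; rewrite -eu.
apply/subsetP=> c cC; apply/negPn/negP=> cu.
(* Otherwise extend c |: (u :&: C) within u to a full union K: minimality of
   u :\: C forces K :\: C = u :\: C, yet K meets C in more points than u. *)
pose I := c |: (u :&: C).
have sIC : I \subset C by rewrite subUset sub1set cC subsetIr.
have iI : union_indep MA MB I by exists f1, f2; split=> //; apply: subset_trans sIC cf.
have iu : union_indep MA MB u by case/munionP: uU => a [b [aA bB _ ->]]; exists a, b.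
have leIu : #|I| <= #|u| by rewrite (card_munion uU) card_union_indep.
have [K [sIK sKIu cardK iK]] := augment_to (union_indep_augment hA hB) iI iu leIu.
have KU : K \in munion MA MB.
  apply/munionP; apply: union_indep_full iK _; exact: etrans cardK (card_munion uU).
have sKuC : K :\: C \subset u :\: C.
  have sKCu : K \subset C :|: u by apply: subset_trans sKIu (setSU _ sIC).
  by apply/subsetP=> z; clear -sKCu; mem_decide z.
move/forall_inP: umin => /(_ _ (imset_f _ KU)) /implyP.
rewrite !setI_symdiff ?munion_subset // => /(_ sKuC) /eqP eKu.
have leIK : #|I| <= #|K :&: C| by apply: subset_leq_card; rewrite subsetI sIK.
have cardI : #|I| = (#|u :&: C|).+1 by rewrite cardsU1 inE (negbTE cu).
move: leIK (cardsID C K) (cardsID C u); rewrite eKu cardI cardK; clear; lia.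
Qed.

Lemma link_baseP w : w \in link A B MA MB <-> exists a b,
  [/\ a \in MA, b \in MB, [disjoint a & b], C \subset a :|: b & w = (a :|: b) :\: C].
Proof. by split=> [/link_cover //|[a [b [aA bB dab sC ->]]]]; apply: mem_link. Qed.

Lemma link_matroid : matroid_on ((A :\: B) :|: (B :\: A)) (link A B MA MB).
Proof.
split.
- by apply/set0Pn; exists ((f1 :|: f2) :\: C); apply: mem_link.
- move=> _ /link_cover[a [b [aA bB _ _ ->]]].
  have := base_subset hA aA; have := base_subset hB bB.
  by move=> sbB saA; apply/subsetP=> z; clear -sbB saA; mem_decide z.
move=> _ _ x /link_cover[a1 [b1 [a1A b1B d1 c1 ->]]] /link_cover[a2 [b2 [a2A b2B d2 c2 ->]]].
rewrite inE => /andP[xw2 /setDP[xu1 xC]].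
have iu1x : union_indep MA MB ((a1 :|: b1) :\ x) by exists a1, b1; rewrite subsetDl.
have iu2 : union_indep MA MB (a2 :|: b2) by exists a2, b2.
have card_u1 := card_setU_base_disjoint a1A b1B d1.
have lt_u12 : #|(a1 :|: b1) :\ x| < #|a2 :|: b2|.
  by rewrite (card_setU_base_disjoint a2A b2B d2) -card_u1 (cardsD1 x (a1 :|: b1)) xu1.
have [y /setDP[yu2 yu1x] iy] := union_indep_augment hA hB iu1x iu2 lt_u12.
have yx : y != x by apply: contraNneq xw2 => exy; rewrite in_setD xC -exy yu2.
have yu1 : y \notin a1 :|: b1 by move: yu1x; rewrite in_setD1 yx.
have yC : y \notin C by apply: contra yu1; apply: (subsetP c1).
have card_y : #|y |: ((a1 :|: b1) :\ x)| = r.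
  by rewrite cardsU1 in_setD1 (negbTE yu1) andbF -card_u1 (cardsD1 x (a1 :|: b1)) xu1.
have [a [b [aA bB dab ey]]] := union_indep_full iy card_y.
exists y; first by rewrite !in_setD yC yu2 (negbTE yu1).
have -> : ((a1 :|: b1) :\: C) :\ x :|: [set y] = (a :|: b) :\: C.
  rewrite -ey; apply/setP=> z; rewrite !(in_setU, in_setD, in_set1).
  by case: (eqVneq z y) => [->|_]; rewrite ?yC ?orbT ?orbF // andbCA.
apply: mem_link => //; rewrite -ey; apply/subsetP=> z zC.
rewrite in_setU1 in_setD1 (subsetP c1 z zC) andbT.
by apply/orP; right; apply: contraNneq xC => <-.
Qed.

End Linking.

Section Blocks.
Variables (T : finType) (A B : {set T}) (M : {set {set T}}).
Implicit Types (X Y : {set T}).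

Definition aclass X := [set X' in aparts A B M | aequiv A B M X X'].

Lemma apartsP X : reflect (X \subset A /\ exists2 Y : {set T}, Y \subset B & X :|: Y \in M)
  (X \in aparts A B M).
Proof.
rewrite inE; apply: (iffP andP) => [[sXA /existsP[Y /andP[sYB XYM]]]|[sXA [Y sYB XYM]]].
  by split=> //; exists Y.
by split=> //; apply/existsP; exists Y; rewrite sYB.
Qed.

Lemma aequivP X X' : reflect (exists Y : {set T}, [/\ Y \subset B, X :|: Y \in M & X' :|: Y \in M])
  (aequiv A B M X X').
Proof.
apply: (iffP existsP) => [[Y /and3P[]]|[Y [sYB XYM X'YM]]]; first by exists Y.
by exists Y; rewrite sYB XYM X'YM.
Qed.

Lemma aequiv_sym X X' : aequiv A B M X X' -> aequiv A B M X' X.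
Proof. by case/aequivP=> Y [sYB XYM X'YM]; apply/aequivP; exists Y. Qed.

Lemma mem_aclass X X' :
  (X' \in aclass X) = (X' \in aparts A B M) && aequiv A B M X X'.
Proof. by rewrite in_set. Qed.

Lemma aclass_refl X : X \in aparts A B M -> X \in aclass X.
Proof.
by move=> XP; rewrite mem_aclass XP; case/apartsP: XP => _ [Y sYB XYM]; apply/aequivP; exists Y.
Qed.

Lemma block_subset beta : beta \in blocks A B M -> beta \subset aparts A B M.
Proof. by case/imsetP=> X _ ->; apply/subsetP=> X'; rewrite mem_aclass => /andP[]. Qed.

Hypothesis hc : complete A B M.

Lemma aequiv_base X X' Y : X \subset A -> X' \subset A -> Y \subset B ->
  aequiv A B M X X' -> X :|: Y \in M -> X' :|: Y \in M.
Proof.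
move=> sXA sX'A sYB /aequivP[Y0 [sY0B XY0M X'Y0M]] XYM.
exact: (hc sXA sX'A sY0B sYB XY0M XYM X'Y0M).
Qed.

Lemma aequiv_trans X1 X2 X3 : X1 \subset A -> X2 \subset A ->
  aequiv A B M X1 X2 -> aequiv A B M X2 X3 -> aequiv A B M X1 X3.
Proof.
move=> sX1A sX2A e12 /aequivP[Y [sYB X2YM X3YM]]; apply/aequivP; exists Y; split=> //.
exact: aequiv_base (aequiv_sym e12) X2YM.
Qed.

Lemma block_aclass beta X : beta \in blocks A B M -> X \in beta -> beta = aclass X.
Proof.
case/imsetP=> X0 X0P -> /[dup] /(subsetP (block_subset (imset_f _ X0P))) XP.
rewrite mem_aclass => /andP[_ e0].
have [sX0A sXA] : X0 \subset A /\ X \subset A by case/apartsP: X0P; case/apartsP: XP.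
apply/setP=> X'; rewrite !mem_aclass; case X'P : (X' \in aparts A B M) => //=.
apply/idP/idP => [e0'|e'].
  exact: aequiv_trans sXA sX0A (aequiv_sym e0) e0'.
exact: aequiv_trans sX0A sXA e0 e'.
Qed.

End Blocks.

Section Coarser.
Variable T : finType.
Implicit Types (A B C X : {set T}) (M N : {set {set T}}).

Definition coarser (EN EM : {set {set {set T}}}) :=
  forall beta, beta \in EN -> union_of_blocks beta EM.

Lemma coarser_refl E : coarser E E.
Proof. by move=> beta betaE; exists [set beta]; rewrite ?sub1set // big_set1. Qed.

Lemma coarser_block A B C M N X : coarser (blocks A C N) (blocks A B M) ->
  X \in aparts A C N ->
  exists2 g, g \in blocks A B M & X \in g /\ g \subset aclass A C N X.
Proof.
move=> hcoarse XP.
have [G sG eG] : union_of_blocks (aclass A C N X) (blocks A B M) := hcoarse _ (imset_f _ XP).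
have : X \in aclass A C N X by apply: aclass_refl.
rewrite eG => /bigcupP[g gG Xg]; exists g; first exact: subsetP sG g gG.
by split=> //; apply: bigcup_sup.
Qed.

Lemma coarser_aparts A B C M N X : coarser (blocks A C N) (blocks A B M) ->
  X \in aparts A C N -> X \in aparts A B M.
Proof.
by move=> hcoarse /(coarser_block hcoarse)[g gE [Xg _]]; apply: subsetP (block_subset gE) X Xg.
Qed.

Lemma coarser_aequiv A B C M N X X' : complete A B M ->
  coarser (blocks A C N) (blocks A B M) ->
  X \in aparts A C N -> X' \in aparts A B M -> aequiv A B M X X' -> aequiv A C N X X'.
Proof.
move=> hc hcoarse XP X'P eXX'; have [g gE [Xg sg]] := coarser_block hcoarse XP.
have : X' \in g by rewrite (block_aclass hc gE Xg) mem_aclass X'P.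
by move/(subsetP sg); rewrite mem_aclass => /andP[].
Qed.

Lemma eq_blocks A B C M N : aparts A B M = aparts A C N ->
  (forall X X', X \in aparts A B M -> X' \in aparts A B M ->
     aequiv A B M X X' = aequiv A C N X X') ->
  blocks A B M = blocks A C N.
Proof.
move=> eP eE; rewrite /blocks -eP; apply: eq_in_imset => X XP; apply/setP=> X'.
rewrite [LHS]in_set [RHS]in_set; case X'P : (X' \in aparts A B M) => //=; exact: eE.
Qed.

End Coarser.

Section DualParts.
Variables (T : finType) (A B : {set T}) (M : {set {set T}}).
Hypotheses (dAB : [disjoint A & B]) (hM : matroid_on (A :|: B) M).
Implicit Types (X Y Z : {set T}).
Local Notation D := (dual (A :|: B) M).

Lemma mem_dual Z : Z \subset A :|: B -> (Z \in D) = ((A :|: B) :\: Z \in M).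
Proof.
move=> sZ; apply/imsetP/idP => [[b bM ->]|ZM]; last by exists ((A :|: B) :\: Z); rewrite ?setDDK.
by rewrite setDDK // (base_subset hM bM).
Qed.

Lemma mem_dual_parts Y X : Y \subset B -> X \subset A ->
  (Y :|: X \in D) = ((A :\: X) :|: (B :\: Y) \in M).
Proof.
move=> sYB sXA; rewrite mem_dual; last by rewrite setUC setUSS.
by congr (_ \in M); apply/setP=> z; mem_decide z.
Qed.

Lemma dual_complete : complete A B M -> complete B A D.
Proof.
move=> hc Y1 Y2 X1 X2 sY1 sY2 sX1 sX2; rewrite !mem_dual_parts // => h11 h12 h21.
exact: (hc _ _ _ _ (subsetDl _ _) (subsetDl _ _) (subsetDl _ _) (subsetDl _ _) h11 h21 h12).
Qed.

Lemma dual_apartsP Y :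
  reflect (Y \subset B /\ exists2 X : {set T}, X \subset A & X :|: (B :\: Y) \in M)
  (Y \in aparts B A D).
Proof.
apply: (iffP (apartsP _ _ _ _)) => -[sYB [X sXA hX]]; split=> //.
  by exists (A :\: X); rewrite ?subsetDl // -mem_dual_parts.
by exists (A :\: X); rewrite ?subsetDl // mem_dual_parts ?subsetDl // setDDK.
Qed.

Lemma dual_aequivP Y1 Y2 : Y1 \subset B -> Y2 \subset B ->
  reflect (exists X : {set T}, [/\ X \subset A, X :|: (B :\: Y1) \in M & X :|: (B :\: Y2) \in M])
    (aequiv B A D Y1 Y2).
Proof.
move=> sY1 sY2; apply: (iffP (aequivP _ _ _ _ _)) => -[X [sXA h1 h2]].
  by exists (A :\: X); rewrite subsetDl -!mem_dual_parts.
by exists (A :\: X); rewrite subsetDl !mem_dual_parts ?subsetDl ?setDDK.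
Qed.

End DualParts.

Section Link3.
Variables (T : finType) (S P Q : {set T}) (M1 M2 : {set {set T}}).
Hypotheses (dSP : [disjoint S & P]) (dPQ : [disjoint P & Q]) (dSQ : [disjoint S & Q]).
Hypotheses (hM1 : matroid_on (S :|: P) M1) (hM2 : matroid_on (P :|: Q) M2).
Variables X0 Y0 Z0 : {set T}.
Hypotheses (sX0 : X0 \subset S) (sY0 : Y0 \subset P) (sZ0 : Z0 \subset Q)
  (h0 : X0 :|: Y0 \in M1) (h0' : (P :\: Y0) :|: Z0 \in M2).
Implicit Types (X Y Z : {set T}).
Local Notation L := (link (S :|: P) (P :|: Q) M1 M2).

Let d0 : [disjoint X0 :|: Y0 & (P :\: Y0) :|: Z0].
Proof. by rewrite -setI_eq0; apply/eqP/setP=> z; mem_decide z. Qed.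

Let c0 : (S :|: P) :&: (P :|: Q) \subset (X0 :|: Y0) :|: ((P :\: Y0) :|: Z0).
Proof. by apply/subsetP=> z; mem_decide z. Qed.

Lemma link3_matroid : matroid_on (S :|: Q) L.
Proof.
have := link_matroid hM1 hM2 h0 h0' d0 c0.
by congr (matroid_on _ _); apply/setP=> z; mem_decide z.
Qed.

Lemma mem_link3 X Z : X \subset S -> Z \subset Q ->
  X :|: Z \in L <-> exists Y, [/\ Y \subset P, X :|: Y \in M1 & (P :\: Y) :|: Z \in M2].
Proof.
move=> sXS sZQ; rewrite (link_baseP hM1 hM2 h0 h0' d0 c0).
split=> [[a [b [aM bM dab cab /setP eXZ]]]|[Y [sYP XYM YZM]]].
  have saSP := base_subset hM1 aM; have sbPQ := base_subset hM2 bM.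
  exists (a :&: P); split; first exact: subsetIr.
    suff -> : X :|: (a :&: P) = a by [].
    by apply/setP=> z; move: (eXZ z); mem_decide z.
  suff -> : (P :\: (a :&: P)) :|: Z = b by [].
  by apply/setP=> z; move: (eXZ z); mem_decide z.
exists (X :|: Y), ((P :\: Y) :|: Z); split=> //.
- by rewrite -setI_eq0; apply/eqP/setP=> z; mem_decide z.
- by apply/subsetP=> z; mem_decide z.
by apply/setP=> z; mem_decide z.
Qed.

End Link3.

Section Chain.
Variables (T : finType) (S P Q : {set T}) (M1 M2 : {set {set T}}).
Hypotheses (dSP : [disjoint S & P]) (dPQ : [disjoint P & Q]) (dSQ : [disjoint S & Q]).
Hypotheses (hM1 : matroid_on (S :|: P) M1) (hM2 : matroid_on (P :|: Q) M2).
Hypotheses (c1 : complete S P M1) (c2 : complete P Q M2).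
Implicit Types (X Y Z : {set T}).
Local Notation D := (dual (S :|: P) M1).
Local Notation L := (link (S :|: P) (P :|: Q) M1 M2).

Let D_complete : complete P S D := dual_complete dSP hM1 c1.

Let D_aparts X Y : X \subset S -> Y \subset P -> X :|: Y \in M1 -> P :\: Y \in aparts P S D.
Proof.
move=> sXS sYP XYM; apply/(dual_apartsP dSP hM1).
by split; [apply: subsetDl | exists X; rewrite ?setDDK].
Qed.

Section CoarserM2.
Hypothesis h12 : coarser (blocks P S D) (blocks P Q M2).

Lemma base_M1_to_M2 X Y : X \subset S -> Y \subset P -> X :|: Y \in M1 ->
  exists2 Z : {set T}, Z \subset Q & (P :\: Y) :|: Z \in M2.
Proof.
move=> sXS sYP /(D_aparts sXS sYP)/(coarser_aparts h12)/apartsP[_ [Z sZQ h]].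
by exists Z.
Qed.

Lemma aequiv_M2_to_M1 X Y1 Y2 Z : X \subset S -> Y1 \subset P -> Y2 \subset P -> Z \subset Q ->
  (P :\: Y1) :|: Z \in M2 -> (P :\: Y2) :|: Z \in M2 -> X :|: Y1 \in M1 -> X :|: Y2 \in M1.
Proof.
move=> sXS sY1 sY2 sZQ Y1Z Y2Z XY1.
have p2 : P :\: Y2 \in aparts P Q M2 by apply/apartsP; split; [apply: subsetDl | exists Z].
have e12 : aequiv P Q M2 (P :\: Y1) (P :\: Y2) by apply/aequivP; exists Z.
have := coarser_aequiv c2 h12 (D_aparts sXS sY1 XY1) p2 e12.
move/(dual_aequivP dSP hM1 (subsetDl _ _) (subsetDl _ _)).
rewrite !setDDK // => -[X' [sX'S X'Y1 X'Y2]].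
exact: (c1 sX'S sXS sY1 sY2 X'Y1 X'Y2 XY1).
Qed.

End CoarserM2.

Section CoarserD.
Hypothesis h21 : coarser (blocks P Q M2) (blocks P S D).

Lemma base_M2_to_M1 Y Z : Y \subset P -> Z \subset Q -> Y :|: Z \in M2 ->
  exists2 X : {set T}, X \subset S & X :|: (P :\: Y) \in M1.
Proof.
move=> sYP sZQ YZM; have : Y \in aparts P Q M2 by apply/apartsP; split=> //; exists Z.
by move/(coarser_aparts h21)/(dual_apartsP dSP hM1) => -[_ [X sXS h]]; exists X.
Qed.

Lemma aequiv_M1_to_M2 X Y1 Y2 Z : X \subset S -> Y1 \subset P -> Y2 \subset P -> Z \subset Q ->
  X :|: Y1 \in M1 -> X :|: Y2 \in M1 -> (P :\: Y1) :|: Z \in M2 -> (P :\: Y2) :|: Z \in M2.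
Proof.
move=> sXS sY1 sY2 sZQ XY1 XY2 Y1Z.
have p1 : P :\: Y1 \in aparts P Q M2 by apply/apartsP; split; [apply: subsetDl | exists Z].
have e12 : aequiv P S D (P :\: Y1) (P :\: Y2).
  by apply/(dual_aequivP dSP hM1 (subsetDl _ _) (subsetDl _ _)); exists X; rewrite !setDDK.
have e := coarser_aequiv D_complete h21 p1 (D_aparts sXS sY2 XY2) e12.
exact: (aequiv_base c2 (subsetDl _ _) (subsetDl _ _) sZQ e Y1Z).
Qed.

Lemma link3_witness : exists X0 Y0 Z0 : {set T}, [/\ [/\ X0 \subset S, Y0 \subset P & Z0 \subset Q],
  X0 :|: Y0 \in M1 & (P :\: Y0) :|: Z0 \in M2].
Proof.
case: (hM2) => /set0Pn[b bM] _ _.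
have eb := setIU_split (base_subset hM2 bM).
have [X sXS h] := base_M2_to_M1 (subsetIr b P) (subsetIr b Q) (etrans (f_equal _ eb) bM).
exists X, (P :\: (b :&: P)), (b :&: Q); rewrite setDDK ?subsetIr // eb.
by split; rewrite ?subsetDl ?subsetIr.
Qed.

Lemma mem_L X Z : X \subset S -> Z \subset Q ->
  X :|: Z \in L <-> exists Y : {set T}, [/\ Y \subset P, X :|: Y \in M1 & (P :\: Y) :|: Z \in M2].
Proof.
have [X0 [Y0 [Z0 [[sX0 sY0 sZ0] h0 h0']]]] := link3_witness.
exact: (mem_link3 dSP dPQ dSQ hM1 hM2 sX0 sY0 sZ0 h0 h0').
Qed.

Lemma L_matroid : matroid_on (S :|: Q) L.
Proof.
have [X0 [Y0 [Z0 [[sX0 sY0 sZ0] h0 h0']]]] := link3_witness.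
exact: (link3_matroid dSP dPQ dSQ hM1 hM2 sX0 sY0 sZ0 h0 h0').
Qed.

Lemma link_dual_link : M2 = link (S :|: P) (S :|: Q) D L.
Proof.
have [X0 [Y0 [Z0 [[sX0 sY0 sZ0] h0 h0']]]] := link3_witness.
have dPS : [disjoint P & S] by rewrite disjoint_sym.
have hD : matroid_on (P :|: S) D by rewrite [P :|: S]setUC; apply: dual_matroid.
have w1 : (P :\: Y0) :|: (S :\: X0) \in D by rewrite (mem_dual_parts dSP hM1) ?subsetDl ?setDDK.
have w2 : (S :\: (S :\: X0)) :|: Z0 \in L by rewrite setDDK //; apply/mem_L => //; exists Y0.
have memDL := mem_link3 dPS dSQ dPQ hD L_matroid (subsetDl P Y0) (subsetDl S X0) sZ0 w1 w2.
have hDL := link3_matroid dPS dSQ dPQ hD L_matroid (subsetDl P Y0) (subsetDl S X0) sZ0 w1 w2.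
rewrite {1}(setUC S P).
suff eYZ Y Z : Y \subset P -> Z \subset Q ->
    (Y :|: Z \in M2) <-> (Y :|: Z \in link (P :|: S) (S :|: Q) D L).
  apply/setP=> b; apply/idP/idP => bM.
    have eb := setIU_split (base_subset hM2 bM).
    by rewrite -eb; apply/(eYZ _ _ (subsetIr _ _) (subsetIr _ _)); rewrite eb.
  have eb := setIU_split (base_subset hDL bM).
  by rewrite -eb; apply/(eYZ _ _ (subsetIr _ _) (subsetIr _ _)); rewrite eb.
move=> sYP sZQ; rewrite memDL //; split=> [YZM|[X' [sX'S YX'D X'Z]]].
  have [X sXS XY'] := base_M2_to_M1 sYP sZQ YZM.
  exists (S :\: X); split; first exact: subsetDl.
    by rewrite (mem_dual_parts dSP hM1) ?subsetDl // setDDK.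
  by rewrite setDDK //; apply/mem_L => //; exists (P :\: Y); rewrite subsetDl setDDK.
rewrite (mem_dual_parts dSP hM1) // in YX'D.
have [Y2 [sY2 XY2 Y2Z]] := (mem_L (subsetDl S X') sZQ).1 X'Z.
by have := aequiv_M1_to_M2 (subsetDl S X') sY2 (subsetDl P Y) sZQ XY2 YX'D Y2Z; rewrite setDDK.
Qed.

End CoarserD.

Section Compatible.
Hypotheses (h12 : coarser (blocks P S D) (blocks P Q M2))
  (h21 : coarser (blocks P Q M2) (blocks P S D)).

Lemma link_complete : complete S Q L.
Proof.
move=> X X' Z Z' sXS sX'S sZQ sZ'Q.
move=> /(mem_L h21 sXS sZQ)[Y1 [sY1 XY1 Y1Z]] /(mem_L h21 sXS sZ'Q)[Y2 [sY2 XY2 Y2Z']].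
move=> /(mem_L h21 sX'S sZQ)[Y3 [sY3 X'Y3 Y3Z]].
apply/(mem_L h21 sX'S sZ'Q); exists Y2; split=> //.
have XY3 := aequiv_M2_to_M1 h12 sXS sY1 sY3 sZQ Y1Z Y3Z XY1.
exact: (c1 sXS sX'S sY3 sY2 XY3 XY2 X'Y3).
Qed.

Lemma link_blocks_S : blocks S P M1 = blocks S Q L.
Proof.
apply: eq_blocks => [|X X' XP X'P].
  apply/setP=> X; apply/apartsP/apartsP => -[sXS [W sW h]]; split=> //.
    have [Z sZQ YZ] := base_M1_to_M2 h12 sXS sW h.
    by exists Z => //; apply/(mem_L h21 sXS sZQ); exists W.
  by have [Y [sYP XY _]] := (mem_L h21 sXS sW).1 h; exists Y.
have [[sXS _] [sX'S _]] := (apartsP _ _ _ _ XP, apartsP _ _ _ _ X'P).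
apply/aequivP/aequivP => -[W [sW h h']].
  have [Z sZQ YZ] := base_M1_to_M2 h12 sXS sW h.
  by exists Z; split=> //; [apply/(mem_L h21 sXS sZQ) | apply/(mem_L h21 sX'S sZQ)]; exists W.
have [Y1 [sY1 XY1 Y1Z]] := (mem_L h21 sXS sW).1 h.
have [Y3 [sY3 X'Y3 Y3Z]] := (mem_L h21 sX'S sW).1 h'.
exists Y3; split=> //.
exact: (aequiv_M2_to_M1 h12 sXS sY1 sY3 sW Y1Z Y3Z XY1).
Qed.

Lemma link_blocks_Q : blocks Q P M2 = blocks Q S L.
Proof.
apply: eq_blocks => [|Z Z' ZP Z'P].
  apply/setP=> Z; apply/apartsP/apartsP => -[sZQ [W sW]]; rewrite setUC => h; split=> //.
    have [X sXS XW] := base_M2_to_M1 h21 sW sZQ h.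
    exists X => //; rewrite setUC; apply/(mem_L h21 sXS sZQ).
    by exists (P :\: W); rewrite subsetDl setDDK.
  have [Y [sYP _ YZ]] := (mem_L h21 sW sZQ).1 h.
  by exists (P :\: Y); rewrite ?subsetDl // setUC.
have [[sZQ _] [sZ'Q _]] := (apartsP _ _ _ _ ZP, apartsP _ _ _ _ Z'P).
apply/aequivP/aequivP => -[W [sW]]; rewrite ![_ :|: W]setUC => h h'.
  have [X sXS XW] := base_M2_to_M1 h21 sW sZQ h.
  exists X; rewrite ![_ :|: X]setUC; split=> //;
    [apply/(mem_L h21 sXS sZQ) | apply/(mem_L h21 sXS sZ'Q)];
    by exists (P :\: W); rewrite subsetDl setDDK.
have [Y1 [sY1 XY1 Y1Z]] := (mem_L h21 sW sZQ).1 h.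
have [Y2 [sY2 XY2 Y2Z']] := (mem_L h21 sW sZ'Q).1 h'.
exists (P :\: Y1); rewrite ![_ :|: (P :\: Y1)]setUC subsetDl; split=> //.
exact: (aequiv_M1_to_M2 h21 sW sY2 sY1 sZ'Q XY2 XY1 Y2Z').
Qed.

End Compatible.

End Chain.

Lemma blocks_set0 (T : finType) (P : {set T}) (M : {set {set T}}) beta :
  matroid_on P M -> beta \in blocks P set0 M -> beta = M.
Proof.
move=> hM /imsetP[X XP ->]; apply/setP=> X'.
have sub0 (Y : {set T}) : Y \subset set0 -> Y = set0 by rewrite subset0 => /eqP.
rewrite mem_aclass; apply/andP/idP => [[_ /aequivP[Y [/sub0-> _]]]|X'M].
  by rewrite setU0.
split; first by apply/apartsP; split; [exact: (base_subset hM X'M) | exists set0; rewrite ?setU0].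
case/apartsP: XP => _ [Y /sub0-> XM]; rewrite setU0 in XM.
by apply/aequivP; exists set0; rewrite !setU0.
Qed.

Theorem theorem13 (T : finType) (S P Q : {set T})
    (MSP MPQ : {set {set T}}) :
  [disjoint S & P] -> [disjoint P & Q] -> [disjoint S & Q] ->
  matroid_on (S :|: P) MSP -> matroid_on (P :|: Q) MPQ ->
  complete S P MSP -> complete P Q MPQ ->
  let MSQ := link (S :|: P) (P :|: Q) MSP MPQ in
  (* 1 *)
  (blocks P S (dual (S :|: P) MSP) = blocks P Q MPQ ->
     [/\ complete S Q MSQ,
         blocks S P MSP = blocks S Q MSQ &
         blocks Q P MPQ = blocks Q S MSQ]) /\
  (* 2 *)
  ((forall beta, beta \in blocks P Q MPQ ->
      union_of_blocks beta (blocks P S (dual (S :|: P) MSP))) ->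
     MPQ = link (S :|: P) (S :|: Q) (dual (S :|: P) MSP) MSQ) /\
  (* 3 *)
  (Q = set0 ->
   union_of_blocks MPQ (blocks P S (dual (S :|: P) MSP)) ->
     MPQ = link (S :|: P) S (dual (S :|: P) MSP) (link (S :|: P) P MSP MPQ)).
Proof.
move=> dSP dPQ dSQ hM1 hM2 c1 c2 MSQ; split.
  move=> eB; have h12 : coarser (blocks P S (dual (S :|: P) MSP)) (blocks P Q MPQ).
    by rewrite eB; apply: coarser_refl.
  have h21 : coarser (blocks P Q MPQ) (blocks P S (dual (S :|: P) MSP)).
    by rewrite eB; apply: coarser_refl.
  by split; [apply: link_complete | apply: link_blocks_S | apply: link_blocks_Q].
split=> [h21|eQ hU]; first exact: (link_dual_link dSP dPQ dSQ hM1 hM2 c1 c2 h21).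
subst Q; have hP : matroid_on P MPQ by rewrite -(setU0 P).
have h21 : coarser (blocks P set0 MPQ) (blocks P S (dual (S :|: P) MSP)).
  by move=> beta /(blocks_set0 hP) ->.
by have := link_dual_link dSP dPQ dSQ hM1 hM2 c1 c2 h21; rewrite !setU0.
Qed.
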